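(* Let $n\geq1$. Every connected component of an effectively open subset of $\mathbb{R}^n$ is effectively open.
   Context: A subset of $\mathbb{R}^n$ is effectively open if it equals $\bigcup_{a\in W}\beta_a$ for some c.e. set $W\subseteq\omega$, where $\beta$ is a standard computable numbering of all rational open balls $B(a,r)$ with $a\in\mathbb{Q}^n$, $r\in\mathbb{Q}^+$ (together with the empty ball). *)

From Stdlib Require Import Reals QArith Qreals ZArith List Arith Cantor.
From Stdlib Require Fin.
Import ListNotations.
Open Scope R_scope.

(* Untyped syntax of primitive recursive functions; arguments are a list of
   naturals (missing arguments default to 0, extra ones are ignored), so every
   term denotes a primitive recursive function. *)
Inductive PR : Type :=
| PRzero : PR
| PRsucc : PR
| PRproj : nat -> PR
| PRcomp : PR -> list PR -> PR
| PRrec  : PR -> PR -> PR.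

Fixpoint PReval (p : PR) (args : list nat) : nat :=
  match p with
  | PRzero => 0
  | PRsucc => S (hd 0%nat args)
  | PRproj i => nth i args 0%nat
  | PRcomp g fs =>
      PReval g ((fix mp (l : list PR) : list nat :=
                   match l with
                   | nil => nil
                   | f :: l' => PReval f args :: mp l'
                   end) fs)
  | PRrec g h =>
      match args with
      | nil => PReval g nil
      | x :: rest =>
          nat_rect (fun _ => nat) (PReval g rest)
                   (fun y acc => PReval h (y :: acc :: rest)) x
      end
  end.

(* A set W of naturals is computably enumerable iff it is the projection of a
   primitive recursive relation (Kleene normal form / Sigma^0_1). *)
Definition ce (W : nat -> Prop) : Prop :=
  exists f : PR, forall x, W x <-> exists y, PReval f [x; y] = 0%nat.

Definition Rn (n : nat) : Type := Fin.t n -> R.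

Fixpoint sumFin (n : nat) : (Fin.t n -> R) -> R :=
  match n with
  | O => fun _ => 0
  | S m => fun f => f Fin.F1 + sumFin m (fun i => f (Fin.FS i))
  end.

Definition dist {n : nat} (x y : Rn n) : R :=
  sqrt (sumFin n (fun i => (x i - y i) ^ 2)).

Definition ball {n : nat} (a : Rn n) (r : R) : Rn n -> Prop :=
  fun x => dist x a < r.

Definition is_open {n : nat} (U : Rn n -> Prop) : Prop :=
  forall x, U x -> exists eps, eps > 0 /\ forall y, ball x eps y -> U y.

Definition connected {n : nat} (S : Rn n -> Prop) : Prop :=
  ~ exists U V : Rn n -> Prop,
      is_open U /\ is_open V /\
      (forall x, S x -> U x \/ V x) /\
      (exists x, S x /\ U x) /\ (exists x, S x /\ V x) /\
      (forall x, S x -> U x -> V x -> False).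

Definition conn_component {n : nat} (A C : Rn n -> Prop) : Prop :=
  (exists x, C x) /\ connected C /\ (forall x, C x -> A x) /\
  forall S : Rn n -> Prop,
    connected S -> (forall x, C x -> S x) -> (forall x, S x -> A x) ->
    forall x, S x -> C x.

(* nat -> Z zigzag: 0,-1,1,-2,2,... ; nat -> Q surjective *)
Definition decZ (p : nat) : Z :=
  if Nat.even p then Z.of_nat (Nat.div2 p) else (- Z.of_nat (Nat.div2 (S p)))%Z.

Definition decQ (m : nat) : Q :=
  let (p, q) := Cantor.of_nat m in Qmake (decZ p) (Pos.of_succ_nat q).

Fixpoint decQlist (n m : nat) : list Q :=
  match n with
  | O => nil
  | S k => let (p, q) := Cantor.of_nat m in decQ p :: decQlist k q
  end.

Definition decQvec (n m : nat) : Rn n :=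
  fun i => Q2R (nth (proj1_sig (Fin.to_nat i)) (decQlist n m) 0%Q).

(* beta n k = B(a, r), a in Q^n, r in Q; when r <= 0 this is the empty ball.
   Every rational ball (and the empty ball) occurs. *)
Definition beta (n k : nat) : Rn n -> Prop :=
  let (c, rc) := Cantor.of_nat k in ball (decQvec n c) (Q2R (decQ rc)).

Definition effectively_open {n : nat} (U : Rn n -> Prop) : Prop :=
  exists W : nat -> Prop, ce W /\ forall x, U x <-> exists k, W k /\ beta n k x.

From Pilot Require Import Defs.
From Stdlib Require Import Reals QArith Qreals List Cantor Lia Lra.
From Stdlib Require Import Classical FunctionalExtensionality.
Import ListNotations.

(* The component [C] of [U = \bigcup_{k in W} beta k] containing a ball [beta k0]
   is the union of the balls [beta k], [k in W], reachable from [k0] by chains of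
   pairwise meeting [W]-balls: each such ball is connected and meets [C], hence lies
   in [C]; conversely the reachable and the unreachable balls would otherwise
   separate [C].  Reachability is c.e. because a chain, together with witnesses
   for its membership in [W], is coded by a single natural number, and whether
   two rational balls meet is a primitive recursive comparison of rationals. *)

(** * Primitive recursive functions *)

Open Scope nat_scope.

Definition pad (k : nat) (v : list nat) : list nat :=
  map (fun i => nth i v 0) (seq 0 k).

Lemma pad_S k v : pad (S k) v = nth 0 v 0 :: pad k (tl v).
Proof.
  unfold pad; simpl; f_equal.
  rewrite <- seq_shift, map_map; apply map_ext; intros i.
  destruct v as [|x v]; [destruct i|]; reflexivity.
Qed.

Lemma pad_length_id l : pad (length l) l = l.
Proof.
  induction l as [|x l IH]; [reflexivity|].
  cbn [length]; rewrite pad_S; simpl; now rewrite IH.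
Qed.

Lemma nth_pad k v i : i < k -> nth i (pad k v) 0 = nth i v 0.
Proof.
  revert v i; induction k as [|k IH]; intros v i Hi; [lia|].
  rewrite pad_S; destruct i as [|i]; [reflexivity|]; simpl.
  rewrite IH by lia; destruct v as [|x v]; [destruct i|]; reflexivity.
Qed.

(* [F] reads only its first [k] arguments, missing ones counting as [0]. *)
Definition primrec (k : nat) (F : list nat -> nat) : Prop :=
  exists p, forall v, PReval p v = F (pad k v).

Definition primrec1 (f : nat -> nat) : Prop := primrec 1 (fun v => f (nth 0 v 0)).
Definition primrec2 (f : nat -> nat -> nat) : Prop :=
  primrec 2 (fun v => f (nth 0 v 0) (nth 1 v 0)).

Lemma primrec_ext k F G :
  (forall v, F (pad k v) = G (pad k v)) -> primrec k F -> primrec k G.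
Proof. intros H [p Hp]; exists p; intros v; now rewrite Hp. Qed.

Lemma PReval_comp g fs args :
  PReval (PRcomp g fs) args = PReval g (map (fun f => PReval f args) fs).
Proof. simpl; f_equal; induction fs as [|f fs IH]; simpl; f_equal; exact IH. Qed.

Lemma primrec_comp m k H gs :
  primrec m H -> Forall (primrec k) gs -> length gs = m ->
  primrec k (fun v => H (map (fun g => g v) gs)).
Proof.
  intros [ph Hph] Hgs Hlen.
  assert (Hps : exists ps, Forall2 (fun p g => forall v, PReval p v = g (pad k v)) ps gs).
  { clear Hlen; induction Hgs as [|g gs [p Hp] _ [ps Hps]]; [now exists nil|].
    exists (p :: ps); now constructor. }
  destruct Hps as [ps Hps]; exists (PRcomp ph ps); intros v.
  rewrite PReval_comp, Hph.
  replace (map (fun f => PReval f v) ps) with (map (fun g => g (pad k v)) gs)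
    by (clear - Hps; induction Hps as [|p g ps gs Hp _ IH]; simpl; now rewrite ?Hp, ?IH).
  now rewrite <- Hlen, <- (length_map (fun g => g (pad k v))), pad_length_id.
Qed.

Lemma primrec_comp1 k f g : primrec1 f -> primrec k g -> primrec k (fun v => f (g v)).
Proof. intros Hf Hg; apply (primrec_comp 1 k _ [g] Hf); auto. Qed.

Lemma primrec_comp2 k f g1 g2 :
  primrec2 f -> primrec k g1 -> primrec k g2 -> primrec k (fun v => f (g1 v) (g2 v)).
Proof. intros Hf H1 H2; apply (primrec_comp 2 k _ [g1; g2] Hf); auto. Qed.

Lemma primrec_proj k i : i < k -> primrec k (fun v => nth i v 0).
Proof. intros Hi; exists (PRproj i); intros v; simpl; now rewrite nth_pad. Qed.

Lemma primrec1_succ : primrec1 S.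
Proof. exists PRsucc; intros [|x v]; reflexivity. Qed.

Lemma primrec_const k c : primrec k (fun _ => c).
Proof.
  induction c as [|c IH]; [now exists PRzero|].
  exact (primrec_comp1 k S (fun _ => c) primrec1_succ IH).
Qed.

Lemma primrec_rec k G H :
  primrec k G -> primrec (S (S k)) H ->
  primrec (S k) (fun v => nat_rect (fun _ => nat) (G (tl v))
                            (fun y acc => H (y :: acc :: tl v)) (nth 0 v 0)).
Proof.
  intros [pg Hg] [ph Hh]; exists (PRrec pg ph); intros v.
  rewrite pad_S; destruct v as [|x r]; simpl; rewrite Hg; [reflexivity|].
  induction x as [|x IH]; simpl; [reflexivity|].
  now rewrite IH, Hh, !pad_S.
Qed.

Lemma primrec2_ext f g : (forall x y, f x y = g x y) -> primrec2 f -> primrec2 g.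
Proof. intros E; apply primrec_ext; intros v; apply E. Qed.

Lemma primrec1_of_primrec2 f : primrec2 (fun x _ => f x) -> primrec1 f.
Proof.
  intros Hf; exact (primrec_comp2 1 _ _ _ Hf (primrec_proj 1 0 ltac:(lia)) (primrec_const 1 0)).
Qed.

Lemma primrec2_rect G H :
  primrec1 G -> primrec 3 H ->
  primrec2 (fun x y => nat_rect (fun _ => nat) (G y) (fun i acc => H [i; acc; y]) x).
Proof.
  intros HG HH.
  assert (HH' : primrec 3 (fun l => H [nth 0 l 0; nth 1 l 0; nth 0 (tl (tl l)) 0])).
  { eapply primrec_ext; [|exact HH]; intros v; now rewrite !pad_S. }
  eapply primrec_ext; [|exact (primrec_rec 1 _ _ HG HH')].
  intros v; now rewrite !pad_S.
Qed.

Lemma primrec2_add : primrec2 Nat.add.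
Proof.
  eapply primrec2_ext; [|apply (primrec2_rect (fun y => y) (fun l => S (nth 1 l 0)))].
  - intros x y; induction x as [|x IH]; simpl in *; lia.
  - exact (primrec_proj 1 0 ltac:(lia)).
  - exact (primrec_comp1 _ _ _ primrec1_succ (primrec_proj 3 1 ltac:(lia))).
Qed.

Lemma primrec2_mul : primrec2 Nat.mul.
Proof.
  eapply primrec2_ext;
    [|apply (primrec2_rect (fun _ => 0) (fun l => nth 1 l 0 + nth 2 l 0))].
  - intros x y; induction x as [|x IH]; simpl in *; lia.
  - exact (primrec_const 1 0).
  - exact (primrec_comp2 _ _ _ _ primrec2_add (primrec_proj 3 1 ltac:(lia))
             (primrec_proj 3 2 ltac:(lia))).
Qed.

Lemma primrec1_pred : primrec1 pred.
Proof.
  apply primrec1_of_primrec2; eapply primrec2_ext;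
    [|apply (primrec2_rect (fun _ => 0) (fun l => nth 0 l 0))].
  - intros [|x] y; reflexivity.
  - exact (primrec_const 1 0).
  - exact (primrec_proj 3 0 ltac:(lia)).
Qed.

Lemma primrec2_sub : primrec2 Nat.sub.
Proof.
  assert (Hflip : primrec2 (fun y x => x - y)).
  { eapply primrec2_ext; [|apply (primrec2_rect (fun x => x) (fun l => pred (nth 1 l 0)))].
    - intros y x; induction y as [|y IH]; simpl in *; lia.
    - exact (primrec_proj 1 0 ltac:(lia)).
    - exact (primrec_comp1 _ _ _ primrec1_pred (primrec_proj 3 1 ltac:(lia))). }
  exact (primrec_comp2 2 _ _ _ Hflip (primrec_proj 2 1 ltac:(lia)) (primrec_proj 2 0 ltac:(lia))).
Qed.

Ltac primrec_arith_step :=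
  lazymatch goal with
  | |- primrec _ (fun _ => ?c) => apply primrec_const
  | |- primrec _ (fun v => nth _ v 0) => apply primrec_proj; lia
  | |- primrec _ (fun v => _ + _) => apply (primrec_comp2 _ _ _ _ primrec2_add)
  | |- primrec _ (fun v => _ - _) => apply (primrec_comp2 _ _ _ _ primrec2_sub)
  | |- primrec _ (fun v => _ * _) => apply (primrec_comp2 _ _ _ _ primrec2_mul)
  | |- primrec _ (fun v => S _) => apply (primrec_comp1 _ _ _ primrec1_succ)
  | |- _ =>
      match goal with
      | H : ?G |- ?G => exact H
      | H : primrec1 _ |- _ => apply (primrec_comp1 _ _ _ H)
      | H : primrec2 _ |- _ => apply (primrec_comp2 _ _ _ _ H)
      end
  end.

Ltac primrec_arith := repeat primrec_arith_step.

Definition bsum (n : nat) (f : nat -> nat) : nat :=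
  nat_rect (fun _ => nat) 0 (fun i acc => acc + f i) n.

Lemma bsum_S n f : bsum (S n) f = bsum n f + f n.
Proof. reflexivity. Qed.

Lemma bsum_ext n f g : (forall i, i < n -> f i = g i) -> bsum n f = bsum n g.
Proof. induction n as [|n IH]; intros H; [reflexivity|]. rewrite !bsum_S, IH, H; auto. Qed.

Lemma bsum_eq0 n f : bsum n f = 0 <-> forall i, i < n -> f i = 0.
Proof.
  induction n as [|n IH]; [split; intros; [lia|reflexivity]|].
  rewrite bsum_S; split.
  - intros H i Hi; destruct (Nat.eq_dec i n) as [->|]; [lia|].
    apply IH; lia.
  - intros H; rewrite (proj2 IH) by auto; rewrite H; lia.
Qed.

Lemma bsum_indicator m w : bsum m (fun t => if t <? w then 1 else 0) = Nat.min m w.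
Proof.
  induction m as [|m IH]; [reflexivity|].
  rewrite bsum_S, IH; destruct (Nat.ltb_spec m w); lia.
Qed.

Lemma primrec2_bsum F : primrec2 F -> primrec2 (fun n y => bsum n (fun i => F i y)).
Proof.
  intros HF; eapply primrec2_ext;
    [|apply (primrec2_rect (fun _ => 0) (fun l => nth 1 l 0 + F (nth 0 l 0) (nth 2 l 0)))].
  - reflexivity.
  - exact (primrec_const 1 0).
  - primrec_arith.
Qed.

(** * Decoding the Cantor pairing *)

Definition tri (s : nat) : nat := nat_rect (fun _ => nat) 0 (fun y acc => acc + S y) s.

Lemma tri_double s : 2 * tri s = s * S s.
Proof. induction s as [|s IH]; simpl in *; lia. Qed.

(* The number of [t] with [tri (S t) <= m], i.e. the diagonal [x + y] of [of_nat m]. *)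
Definition cantor_diag (m : nat) : nat := bsum m (fun t => 1 - (S t * S (S t) - 2 * m)).
Definition cantor_snd (m : nat) : nat := m - tri (cantor_diag m).
Definition cantor_fst (m : nat) : nat := cantor_diag m - cantor_snd m.

Lemma of_nat_cantor m : Cantor.of_nat m = (cantor_fst m, cantor_snd m).
Proof.
  destruct (Cantor.of_nat m) as [x y] eqn:E.
  assert (Hm : m * 2 = y * 2 + (y + x) * S (y + x))
    by (rewrite <- (cancel_to_of m), E; apply to_nat_spec).
  assert (Hd : cantor_diag m = x + y).
  { unfold cantor_diag.
    rewrite (bsum_ext _ _ (fun t => if t <? x + y then 1 else 0)), bsum_indicator; [nia|].
    intros t _; destruct (Nat.ltb_spec t (x + y)); nia. }
  pose proof (tri_double (x + y)).
  unfold cantor_fst, cantor_snd; rewrite Hd; f_equal; lia.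
Qed.

Lemma cantor_fst_pair a b : cantor_fst (to_nat (a, b)) = a.
Proof. pose proof (of_nat_cantor (to_nat (a, b))) as H; rewrite cancel_of_to in H; congruence. Qed.

Lemma cantor_snd_pair a b : cantor_snd (to_nat (a, b)) = b.
Proof. pose proof (of_nat_cantor (to_nat (a, b))) as H; rewrite cancel_of_to in H; congruence. Qed.

Lemma primrec1_tri : primrec1 tri.
Proof.
  apply primrec1_of_primrec2; eapply primrec2_ext;
    [|apply (primrec2_rect (fun _ => 0) (fun l => nth 1 l 0 + S (nth 0 l 0)))].
  - reflexivity.
  - exact (primrec_const 1 0).
  - primrec_arith.
Qed.

Lemma primrec1_cantor_diag : primrec1 cantor_diag.
Proof.
  assert (H : primrec2 (fun t m => 1 - (S t * S (S t) - 2 * m)))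
    by (unfold primrec2; primrec_arith).
  exact (primrec_comp2 1 _ _ _ (primrec2_bsum _ H) (primrec_proj 1 0 ltac:(lia))
           (primrec_proj 1 0 ltac:(lia))).
Qed.

Lemma primrec1_cantor_snd : primrec1 cantor_snd.
Proof.
  exact (primrec_comp2 1 _ _ _ primrec2_sub (primrec_proj 1 0 ltac:(lia))
           (primrec_comp1 1 _ _ primrec1_tri primrec1_cantor_diag)).
Qed.

Lemma primrec1_cantor_fst : primrec1 cantor_fst.
Proof.
  exact (primrec_comp2 1 _ _ _ primrec2_sub primrec1_cantor_diag primrec1_cantor_snd).
Qed.

(* Nested Cantor pairs [<s 0, <s 1, <s 2, ...>>>] code the sequence [s]. *)
Definition code_nth (m i : nat) : nat := cantor_fst (Nat.iter i cantor_snd m).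

Lemma code_nth_prefix L : forall s : nat -> nat, exists m, forall i, i <= L -> code_nth m i = s i.
Proof.
  induction L as [|L IH]; intros s.
  - exists (to_nat (s 0, 0)); intros i Hi; replace i with 0 by lia; apply cantor_fst_pair.
  - destruct (IH (fun i => s (S i))) as [m Hm]; exists (to_nat (s 0, m)).
    intros [|i] Hi; unfold code_nth; [apply cantor_fst_pair|].
    rewrite Nat.iter_succ_r, cantor_snd_pair; apply Hm; lia.
Qed.

Lemma primrec2_code_nth : primrec2 code_nth.
Proof.
  assert (Hiter : primrec2 (fun i m => Nat.iter i cantor_snd m)).
  { eapply primrec2_ext; [|apply (primrec2_rect (fun m => m) (fun l => cantor_snd (nth 1 l 0)))].
    - reflexivity.
    - exact (primrec_proj 1 0 ltac:(lia)).
    - apply (primrec_comp1 _ _ _ primrec1_cantor_snd); primrec_arith. }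
  unfold primrec2, code_nth; apply (primrec_comp1 _ _ _ primrec1_cantor_fst).
  exact (primrec_comp2 2 _ _ _ Hiter (primrec_proj 2 1 ltac:(lia)) (primrec_proj 2 0 ltac:(lia))).
Qed.

Ltac primrec_auto :=
  repeat lazymatch goal with
  | |- primrec _ (fun v => code_nth _ _) => apply (primrec_comp2 _ _ _ _ primrec2_code_nth)
  | |- primrec _ (fun v => cantor_fst _) => apply (primrec_comp1 _ _ _ primrec1_cantor_fst)
  | |- primrec _ (fun v => cantor_snd _) => apply (primrec_comp1 _ _ _ primrec1_cantor_snd)
  | |- _ => primrec_arith_step
  end.

(** * Reachability along a decidable relation *)

Inductive reach (W : nat -> Prop) (A : nat -> nat -> Prop) (k0 : nat) : nat -> Prop :=
| reach_base : W k0 -> reach W A k0 k0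
| reach_step j k : reach W A k0 j -> W k -> A j k -> reach W A k0 k.

Definition path_to (W : nat -> Prop) (A : nat -> nat -> Prop) (k0 k L : nat) (s : nat -> nat) :=
  s 0 = k /\ s L = k0 /\ (forall i, i <= L -> W (s i)) /\
  (forall i, i < L -> A (s (S i)) (s i)).

Lemma reach_path W A k0 k : reach W A k0 k <-> exists L s, path_to W A k0 k L s.
Proof.
  split.
  - induction 1 as [Wk0|j k _ [L [s (Hs0 & HsL & HW & HA)]] Wk Ajk].
    + exists 0, (fun _ => k0); repeat split; auto; lia.
    + exists (S L), (fun i => match i with 0 => k | S i => s i end); repeat split; auto.
      * intros [|i] Hi; [exact Wk|apply HW; lia].
      * intros [|i] Hi; [now rewrite Hs0|apply HA; lia].
  - intros (L & s & Hs0 & HsL & HW & HA).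
    assert (H : forall d, d <= L -> reach W A k0 (s (L - d))).
    { induction d as [|d IH]; intros Hd.
      - rewrite Nat.sub_0_r, HsL; apply reach_base; rewrite <- HsL; apply HW; lia.
      - apply (reach_step _ _ _ (s (L - d))); [apply IH; lia|apply HW; lia|].
        replace (L - d) with (S (L - S d)) by lia; apply HA; lia. }
    rewrite <- Hs0, <- (Nat.sub_diag L); apply H; lia.
Qed.

Lemma finite_choice (P : nat -> nat -> Prop) L :
  (forall i, i <= L -> exists z, P i z) -> exists w, forall i, i <= L -> P i (w i).
Proof.
  induction L as [|L IH]; intros H.
  - destruct (H 0 (le_n 0)) as [z Hz]; exists (fun _ => z); intros i Hi.
    now replace i with 0 by lia.
  - destruct IH as [w Hw]; [intros i Hi; apply H; lia|].
    destruct (H (S L) (le_n _)) as [z Hz].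
    exists (fun i => if i <=? L then w i else z); intros i Hi.
    destruct (Nat.leb_spec i L); [now apply Hw|now replace i with (S L) by lia].
Qed.

Definition absdiff (a b : nat) : nat := (a - b) + (b - a).

(* [y = <L, <ms, mw>>] packs a length, the code of a path listed backwards from [k]
   to [k0], and the code of [g]-witnesses for its nodes. *)
Definition path_check (g t : nat -> nat -> nat) (k0 k y : nat) : nat :=
  absdiff (code_nth (cantor_fst (cantor_snd y)) 0) k
  + absdiff (code_nth (cantor_fst (cantor_snd y)) (cantor_fst y)) k0
  + bsum (S (cantor_fst y)) (fun i => g (code_nth (cantor_fst (cantor_snd y)) i)
                                        (code_nth (cantor_snd (cantor_snd y)) i))
  + bsum (cantor_fst y) (fun i => t (code_nth (cantor_fst (cantor_snd y)) (S i))
                                    (code_nth (cantor_fst (cantor_snd y)) i)).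

Lemma path_check_spec g t k0 k L ms mw :
  path_check g t k0 k (to_nat (L, to_nat (ms, mw))) = 0 <->
  code_nth ms 0 = k /\ code_nth ms L = k0 /\
  (forall i, i <= L -> g (code_nth ms i) (code_nth mw i) = 0) /\
  (forall i, i < L -> t (code_nth ms (S i)) (code_nth ms i) = 0).
Proof.
  unfold path_check, absdiff; rewrite !cantor_snd_pair, !cantor_fst_pair.
  match goal with |- ?a + ?b + ?B1 + ?B2 = 0 <-> _ =>
    assert (E1 : B1 = 0 <-> forall i, i <= L -> g (code_nth ms i) (code_nth mw i) = 0)
      by (rewrite bsum_eq0; split; intros H i Hi; apply H; lia);
    assert (E2 : B2 = 0 <-> forall i, i < L -> t (code_nth ms (S i)) (code_nth ms i) = 0)
      by apply bsum_eq0
  end.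
  rewrite <- E1, <- E2; lia.
Qed.

Lemma primrec_path_check g t k0 :
  primrec2 g -> primrec2 t -> primrec2 (path_check g t k0).
Proof.
  intros Hg Ht.
  assert (Hs : primrec2 (fun i y => g (code_nth (cantor_fst (cantor_snd y)) i)
                                     (code_nth (cantor_snd (cantor_snd y)) i)))
    by (unfold primrec2; primrec_auto).
  assert (Ha : primrec2 (fun i y => t (code_nth (cantor_fst (cantor_snd y)) (S i))
                                     (code_nth (cantor_fst (cantor_snd y)) i)))
    by (unfold primrec2; primrec_auto).
  apply primrec2_bsum in Hs, Ha.
  unfold primrec2, path_check, absdiff; primrec_auto.
  all: first [apply (primrec_comp2 _ _ _ _ Hs) | apply (primrec_comp2 _ _ _ _ Ha)]; primrec_auto.
Qed.

Lemma ce_reach W A t k0 :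
  ce W -> primrec2 t -> (forall i j, A i j <-> t i j = 0) -> ce (reach W A k0).
Proof.
  intros [f Hf] Ht HA.
  assert (Hg : primrec2 (fun a b => PReval f [a; b]))
    by (exists (PRcomp f [PRproj 0; PRproj 1]); intros v; reflexivity).
  destruct (primrec_path_check _ _ k0 Hg Ht) as [p Hp]; exists p; intros k.
  assert (Ep : forall y, PReval p [k; y] = path_check (fun a b => PReval f [a; b]) t k0 k y)
    by (intros y; rewrite Hp; reflexivity).
  rewrite reach_path; split.
  - intros (L & s & Hs0 & HsL & HW & HAs).
    destruct (finite_choice (fun i z => PReval f [s i; z] = 0) L) as [w Hw].
    { intros i Hi; now apply Hf, HW. }
    destruct (code_nth_prefix L s) as [ms Hms], (code_nth_prefix L w) as [mw Hmw].
    exists (to_nat (L, to_nat (ms, mw))); rewrite Ep, path_check_spec.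
    repeat split.
    + now rewrite Hms by lia.
    + now rewrite Hms by lia.
    + intros i Hi; rewrite Hms, Hmw by lia; now apply Hw.
    + intros i Hi; rewrite !Hms by lia; apply HA, HAs, Hi.
  - intros [y Hy]; rewrite Ep, <- (cancel_to_of y) in Hy.
    destruct (of_nat y) as [L r]; rewrite <- (cancel_to_of r) in Hy; destruct (of_nat r) as [ms mw].
    apply path_check_spec in Hy as (Hs0 & HsL & HW & HAs).
    exists L, (code_nth ms); repeat split; auto.
    + intros i Hi; apply Hf; eauto.
    + intros i Hi; now apply HA, HAs.
Qed.

(** * Euclidean geometry of [Rn n] *)

(* [Reals] exports a [dist] and a [ball] of its own. *)
Notation dist := Defs.dist.
Notation ball := Defs.ball.
Open Scope R_scope.

Lemma sumFin_ext n f g : (forall i, f i = g i) -> sumFin n f = sumFin n g.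
Proof.
  revert f g; induction n as [|n IH]; intros f g H; simpl; [reflexivity|].
  now rewrite H, (IH (fun i => f (Fin.FS i)) (fun i => g (Fin.FS i))).
Qed.

Lemma sumFin_nonneg n f : (forall i, 0 <= f i) -> 0 <= sumFin n f.
Proof.
  revert f; induction n as [|n IH]; intros f H; simpl; [lra|].
  pose proof (IH (fun i => f (Fin.FS i)) (fun i => H _)); pose proof (H Fin.F1); lra.
Qed.

Lemma sumFin_lin n f g a b :
  sumFin n (fun i => a * f i + b * g i) = a * sumFin n f + b * sumFin n g.
Proof.
  revert f g; induction n as [|n IH]; intros f g; simpl; [lra|].
  rewrite (IH (fun i => f (Fin.FS i)) (fun i => g (Fin.FS i))); lra.
Qed.

Definition sqnorm {n} (u : Rn n) : R := sumFin n (fun i => u i ^ 2).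
Definition norm {n} (u : Rn n) : R := sqrt (sqnorm u).

Lemma sqnorm_nonneg n (u : Rn n) : 0 <= sqnorm u.
Proof. apply sumFin_nonneg; intros; apply pow2_ge_0. Qed.

Lemma sqnorm_add n (u v : Rn n) :
  sqnorm (fun i => u i + v i) = sqnorm u + 2 * sumFin n (fun i => u i * v i) + sqnorm v.
Proof.
  unfold sqnorm.
  rewrite (sumFin_ext n _ (fun i => 1 * u i ^ 2 + 1 * (2 * (u i * v i) + 1 * v i ^ 2)))
    by (intros; ring).
  rewrite sumFin_lin, (sumFin_lin n (fun i => u i * v i) (fun i => v i ^ 2) 2 1); ring.
Qed.

Lemma discriminant_nonpos A B C :
  0 <= A -> (forall t, 0 <= A * t ^ 2 + 2 * B * t + C) -> B ^ 2 <= A * C.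
Proof.
  intros HA H; destruct (Req_dec A 0) as [->|HA0].
  - destruct (Req_dec B 0) as [->|HB]; [lra|].
    specialize (H (- (C + 1) / (2 * B))).
    replace (0 * (- (C + 1) / (2 * B)) ^ 2 + 2 * B * (- (C + 1) / (2 * B)) + C)
      with (-1) in H by (field; auto); lra.
  - specialize (H (- B / A)).
    replace (A * (- B / A) ^ 2 + 2 * B * (- B / A) + C) with (C - B ^ 2 / A) in H
      by (field; auto).
    assert (E : B ^ 2 = A * (B ^ 2 / A)) by (field; auto).
    rewrite E; apply Rmult_le_compat_l; lra.
Qed.

Lemma cauchy_schwarz n (u v : Rn n) :
  (sumFin n (fun i => u i * v i)) ^ 2 <= sqnorm u * sqnorm v.
Proof.
  apply discriminant_nonpos; [apply sqnorm_nonneg|]; intros t.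
  pose proof (sqnorm_nonneg n (fun i => t * u i + v i)) as H.
  rewrite sqnorm_add in H; unfold sqnorm in *.
  rewrite (sumFin_ext n (fun i => (t * u i) ^ 2) (fun i => t ^ 2 * u i ^ 2 + 0 * u i)),
    (sumFin_ext n (fun i => t * u i * v i) (fun i => t * (u i * v i) + 0 * u i)),
    !sumFin_lin in H by (intros; ring).
  lra.
Qed.

Lemma norm_add_le n (u v : Rn n) : norm (fun i => u i + v i) <= norm u + norm v.
Proof.
  unfold norm; pose proof (cauchy_schwarz n u v) as CS; rewrite sqnorm_add.
  pose proof (pow2_sqrt _ (sqnorm_nonneg n u)) as Eu.
  pose proof (pow2_sqrt _ (sqnorm_nonneg n v)) as Ev.
  pose proof (sqrt_pos (sqnorm u)); pose proof (sqrt_pos (sqnorm v)).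
  set (a := sqrt (sqnorm u)) in *; set (b := sqrt (sqnorm v)) in *.
  set (B := sumFin n (fun i => u i * v i)) in *.
  rewrite <- (sqrt_pow2 (a + b)) by lra; apply sqrt_le_1_alt.
  rewrite <- Eu, <- Ev in *.
  assert (0 <= a * b) by (apply Rmult_le_pos; lra).
  assert (B <= a * b) by nra.
  lra.
Qed.

Lemma norm_scal n (u : Rn n) c : norm (fun i => c * u i) = Rabs c * norm u.
Proof.
  unfold norm, sqnorm.
  rewrite (sumFin_ext n _ (fun i => c ^ 2 * u i ^ 2 + 0 * u i)), sumFin_lin by (intros; ring).
  rewrite Rmult_0_l, Rplus_0_r, sqrt_mult_alt by apply pow2_ge_0.
  now rewrite <- sqrt_Rsqr_abs, Rsqr_pow2.
Qed.

Lemma dist_norm n (x y : Rn n) : dist x y = norm (fun i => x i - y i).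
Proof. reflexivity. Qed.

Lemma dist_nonneg n (x y : Rn n) : 0 <= dist x y.
Proof. apply sqrt_pos. Qed.

Lemma dist_sym n (x y : Rn n) : dist x y = dist y x.
Proof. unfold dist; f_equal; apply sumFin_ext; intros; ring. Qed.

Lemma dist_triangle n (x y z : Rn n) : dist x z <= dist x y + dist y z.
Proof.
  rewrite !dist_norm.
  replace (fun i => x i - z i) with (fun i => (x i - y i) + (y i - z i))
    by (apply functional_extensionality; intros; ring).
  apply norm_add_le.
Qed.

Lemma ball_open n (a : Rn n) r : is_open (ball a r).
Proof.
  intros x Hx; exists (r - dist x a); split; [unfold ball in Hx; lra|].
  intros y Hy; unfold ball in *; pose proof (dist_triangle n y x a); lra.
Qed.

Definition lerp {n} (x y : Rn n) (t : R) : Rn n := fun i => x i + t * (y i - x i).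

Lemma lerp0 n (x y : Rn n) : lerp x y 0 = x.
Proof. apply functional_extensionality; intros; unfold lerp; ring. Qed.

Lemma lerp1 n (x y : Rn n) : lerp x y 1 = y.
Proof. apply functional_extensionality; intros; unfold lerp; ring. Qed.

Lemma dist_lerp n (x y : Rn n) t s : dist (lerp x y t) (lerp x y s) = Rabs (t - s) * dist y x.
Proof.
  rewrite !dist_norm, <- norm_scal; unfold norm, sqnorm; f_equal.
  apply sumFin_ext; intros; unfold lerp; ring.
Qed.

Lemma ball_convex n (a : Rn n) r x y t :
  ball a r x -> ball a r y -> 0 <= t <= 1 -> ball a r (lerp x y t).
Proof.
  unfold ball; intros Hx Hy Ht; rewrite dist_norm.
  replace (fun i => lerp x y t i - a i)
    with (fun i => (1 - t) * (x i - a i) + t * (y i - a i))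
    by (apply functional_extensionality; intros; unfold lerp; ring).
  eapply Rle_lt_trans; [apply norm_add_le|].
  rewrite !norm_scal, <- !dist_norm, !Rabs_right by lra.
  destruct (Req_dec t 1) as [->|]; nra.
Qed.

Lemma balls_meet_iff n (a b : Rn n) r s :
  (exists z, ball a r z /\ ball b s z) <-> 0 < r /\ 0 < s /\ dist a b ^ 2 < (r + s) ^ 2.
Proof.
  pose proof (dist_nonneg n a b); split.
  - intros (z & Hza & Hzb); unfold ball in *.
    pose proof (dist_nonneg n z a); pose proof (dist_nonneg n z b).
    pose proof (dist_triangle n a z b); rewrite (dist_sym n a z) in *.
    repeat split; nra.
  - intros (Hr & Hs & Hd).
    assert (Hlt : dist a b < r + s) by nra.
    set (t := r / (r + s)).
    assert (Ht : t * (r + s) = r) by (unfold t; field; lra).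
    assert (Ht0 : 0 < t) by (unfold t; apply Rdiv_lt_0_compat; lra).
    assert (Ht1 : t < 1) by nra.
    exists (lerp a b t); unfold ball; split.
    + rewrite <- (lerp0 n a b) at 2; rewrite dist_lerp, dist_sym, Rminus_0_r, Rabs_right by lra.
      nra.
    + rewrite <- (lerp1 n a b) at 2; rewrite dist_lerp, dist_sym, Rabs_left by lra.
      nra.
Qed.

(** * Connectedness *)

Lemma unit_interval_connected (P Q : R -> Prop) :
  (forall t, 0 <= t <= 1 -> P t \/ Q t) ->
  (forall t, P t -> exists d, 0 < d /\ forall u, Rabs (u - t) < d -> P u) ->
  (forall t, Q t -> exists d, 0 < d /\ forall u, Rabs (u - t) < d -> Q u) ->
  P 0 -> Q 1 -> exists t, 0 <= t <= 1 /\ P t /\ Q t.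
Proof.
  intros Hcov HP HQ P0 Q1.
  (* [s] below is the supremum of the [t] with [[0, t]] inside [P]; if [s] were in [P]
     only, it could be pushed further right. *)
  set (E := fun t => 0 <= t <= 1 /\ forall u, 0 <= u <= t -> P u).
  assert (E0 : E 0) by (split; [lra|intros u Hu; now replace u with 0 by lra]).
  assert (Eb : bound E) by (exists 1; intros t Et; apply Et).
  destruct (completeness E Eb (ex_intro _ 0 E0)) as [s [Hub Hlub]].
  assert (Hs : 0 <= s <= 1) by (split; [apply Hub, E0|apply Hlub; intros t Et; apply Et]).
  assert (Hbelow : forall u, 0 <= u < s -> P u).
  { intros u Hu; apply NNPP; intros Hnu.
    assert (Hu' : is_upper_bound E u).
    { intros t [Ht Hall]; destruct (Rle_dec t u) as [|Htu]; [auto|].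
      exfalso; apply Hnu, Hall; lra. }
    specialize (Hlub u Hu'); lra. }
  destruct (Hcov s Hs) as [Ps|Qs].
  - destruct (Req_dec s 1) as [->|Hs1]; [exists 1; split; [lra|auto]|].
    exfalso; destruct (HP s Ps) as [d [Hd HPd]].
    set (t := Rmin 1 (s + d / 2)).
    assert (Ht : s < t <= s + d / 2)
      by (split; [apply Rmin_glb_lt; lra|apply Rmin_r]).
    assert (Et : E t).
    { split; [split; [lra|apply Rmin_l]|].
      intros u Hu; destruct (Rlt_dec u s); [apply Hbelow; lra|].
      apply HPd; rewrite Rabs_right; lra. }
    specialize (Hub t Et); lra.
  - destruct (Req_dec s 0) as [->|Hs0]; [exists 0; split; [lra|auto]|].
    destruct (HQ s Qs) as [d [Hd HQd]].
    set (u := Rmax 0 (s - d / 2)).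
    assert (Hu : 0 <= u < s /\ s - d / 2 <= u)
      by (split; [split; [apply Rmax_l|apply Rmax_lub_lt; lra]|apply Rmax_r]).
    exists u; repeat split; try lra.
    + apply Hbelow; lra.
    + apply HQd; rewrite Rabs_left; lra.
Qed.

Lemma open_along_segment n (U : Rn n -> Prop) (x y : Rn n) t :
  is_open U -> U (lerp x y t) ->
  exists d, 0 < d /\ forall u, Rabs (u - t) < d -> U (lerp x y u).
Proof.
  intros HU Ut; destruct (HU _ Ut) as [e [He Hball]].
  pose proof (dist_nonneg n y x); set (D := dist y x) in *.
  exists (e / (D + 1)); split; [apply Rdiv_lt_0_compat; lra|].
  intros u Hu; apply Hball; unfold ball; rewrite dist_lerp; fold D.
  apply (Rmult_lt_compat_r (D + 1)) in Hu; [|lra].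
  replace (e / (D + 1) * (D + 1)) with e in Hu by (field; lra).
  pose proof (Rabs_pos (u - t)); nra.
Qed.

Lemma convex_connected n (S : Rn n -> Prop) :
  (forall x y t, S x -> S y -> 0 <= t <= 1 -> S (lerp x y t)) -> connected S.
Proof.
  intros Hconv (U & V & HU & HV & Hcov & (x & Sx & Ux) & (y & Sy & Vy) & Hdisj).
  destruct (unit_interval_connected (fun t => U (lerp x y t)) (fun t => V (lerp x y t)))
    as (t & Ht & Ut & Vt).
  - intros t Ht; apply Hcov, Hconv; auto.
  - intros t; now apply open_along_segment.
  - intros t; now apply open_along_segment.
  - now rewrite lerp0.
  - now rewrite lerp1.
  - exact (Hdisj _ (Hconv x y t Sx Sy Ht) Ut Vt).
Qed.

Lemma ball_connected n (a : Rn n) r : connected (ball a r).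
Proof. apply convex_connected; intros; now apply ball_convex. Qed.

Lemma connected_one_side n (A U V : Rn n -> Prop) :
  connected A -> is_open U -> is_open V -> (forall x, A x -> U x \/ V x) ->
  (forall x, A x -> U x -> V x -> False) ->
  (forall x, A x -> U x) \/ (forall x, A x -> V x).
Proof.
  intros HA HU HV Hcov Hdisj.
  destruct (classic (exists x, A x /\ V x)) as [[x [Ax Vx]]|HnV].
  - right; intros z Az; destruct (Hcov z Az) as [Uz|Vz]; auto.
    exfalso; apply HA; exists U, V; repeat split; eauto.
  - left; intros z Az; destruct (Hcov z Az) as [Uz|Vz]; auto.
    exfalso; eauto.
Qed.

Lemma connected_union n (A B : Rn n -> Prop) :
  connected A -> connected B -> (exists p, A p /\ B p) -> connected (fun z => A z \/ B z).
Proof.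
  intros HA HB [p [Ap Bp]] (U & V & HU & HV & Hcov & (x & Sx & Ux) & (y & Sy & Vy) & Hdisj).
  destruct (connected_one_side n A U V HA HU HV (fun z Hz => Hcov z (or_introl Hz))
              (fun z Hz => Hdisj z (or_introl Hz))) as [AU|AV];
  destruct (connected_one_side n B U V HB HU HV (fun z Hz => Hcov z (or_intror Hz))
              (fun z Hz => Hdisj z (or_intror Hz))) as [BU|BV].
  - destruct Sy as [Ay|By]; [exact (Hdisj y (or_introl Ay) (AU y Ay) Vy)
                             |exact (Hdisj y (or_intror By) (BU y By) Vy)].
  - exact (Hdisj p (or_introl Ap) (AU p Ap) (BV p Bp)).
  - exact (Hdisj p (or_introl Ap) (BU p Bp) (AV p Ap)).
  - destruct Sx as [Ax|Bx]; [exact (Hdisj x (or_introl Ax) Ux (AV x Ax))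
                             |exact (Hdisj x (or_intror Bx) Ux (BV x Bx))].
Qed.

Lemma component_absorbs n (U C S : Rn n -> Prop) :
  conn_component U C -> connected S -> (forall x, S x -> U x) -> (exists p, C p /\ S p) ->
  forall x, S x -> C x.
Proof.
  intros (_ & HC & HCU & Hmax) HS HSU Hp x Sx.
  apply (Hmax (fun z => C z \/ S z)); auto.
  - now apply connected_union.
  - intros z [Cz|Sz]; auto.
Qed.

(** * Rational arithmetic on codes *)

Open Scope nat_scope.

Lemma primrec1_even : primrec1 (fun s => Nat.b2n (Nat.even s)).
Proof.
  apply primrec1_of_primrec2; eapply primrec2_ext;
    [|apply (primrec2_rect (fun _ => 1) (fun l => 1 - nth 1 l 0))].
  - intros x y; induction x as [|x IH]; [reflexivity|].
    cbn [nat_rect nth] in *; rewrite IH, Nat.even_succ, <- Nat.negb_even.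
    now destruct (Nat.even x).
  - exact (primrec_const 1 1).
  - primrec_arith.
Qed.

Lemma primrec1_div2 : primrec1 Nat.div2.
Proof.
  apply primrec1_of_primrec2; eapply primrec2_ext;
    [|apply (primrec2_rect (fun _ => 0)
               (fun l => nth 1 l 0 + (1 - Nat.b2n (Nat.even (nth 0 l 0)))))].
  - intros x y; induction x as [|x IH]; [reflexivity|].
    cbn [nat_rect nth] in *; rewrite IH.
    pose proof (Nat.div2_odd x); pose proof (Nat.div2_odd (S x)).
    rewrite Nat.odd_succ in *; rewrite <- Nat.negb_even in *.
    destruct (Nat.even x); simpl in *; lia.
  - exact (primrec_const 1 0).
  - pose proof primrec1_even; primrec_arith.
Qed.

(* A rational with split sign, so that all arithmetic stays in [nat]; denominators are
   kept positive. *)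
Record nq := NQ { nq_pos : nat; nq_neg : nat; nq_den : nat }.

Definition nq_val (a : nq) : R := ((INR (nq_pos a) - INR (nq_neg a)) / INR (nq_den a))%R.

Definition nq_zero : nq := NQ 0 0 1.
Definition nq_add (a b : nq) : nq :=
  NQ (nq_pos a * nq_den b + nq_pos b * nq_den a) (nq_neg a * nq_den b + nq_neg b * nq_den a)
     (nq_den a * nq_den b).
Definition nq_opp (a : nq) : nq := NQ (nq_neg a) (nq_pos a) (nq_den a).
Definition nq_mul (a b : nq) : nq :=
  NQ (nq_pos a * nq_pos b + nq_neg a * nq_neg b) (nq_pos a * nq_neg b + nq_neg a * nq_pos b)
     (nq_den a * nq_den b).

Definition nq_lt_test (a b : nq) : nat :=
  S (nq_pos a * nq_den b + nq_neg b * nq_den a) - (nq_pos b * nq_den a + nq_neg a * nq_den b).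

Definition nq_of_code (m : nat) : nq :=
  NQ (Nat.b2n (Nat.even (cantor_fst m)) * Nat.div2 (cantor_fst m))
     ((1 - Nat.b2n (Nat.even (cantor_fst m))) * Nat.div2 (S (cantor_fst m)))
     (S (cantor_snd m)).

Lemma nq_val_of_code m : Q2R (decQ m) = nq_val (nq_of_code m).
Proof.
  unfold decQ; rewrite of_nat_cantor; unfold Q2R, nq_val, nq_of_code.
  cbn [Qnum Qden nq_pos nq_neg nq_den].
  rewrite Znat.Zpos_P_of_succ_nat, <- Znat.Nat2Z.inj_succ, <- INR_IZR_INZ.
  unfold decZ; destruct (Nat.even (cantor_fst m)); cbn [Nat.b2n];
    rewrite ?Ropp_Ropp_IZR, <- INR_IZR_INZ, ?Nat.sub_diag, ?Nat.sub_0_r,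
      ?Nat.mul_1_l, ?Nat.mul_0_l;
    change (INR 0) with 0%R; unfold Rdiv; lra.
Qed.

Lemma nq_den_of_code m : 0 < nq_den (nq_of_code m).
Proof. simpl; lia. Qed.

Lemma nq_add_val a b :
  0 < nq_den a -> 0 < nq_den b -> nq_val (nq_add a b) = (nq_val a + nq_val b)%R.
Proof.
  intros Ha%lt_0_INR Hb%lt_0_INR; unfold nq_val, nq_add; cbn [nq_pos nq_neg nq_den].
  rewrite !plus_INR, !mult_INR; field; lra.
Qed.

Lemma nq_opp_val a : nq_val (nq_opp a) = (- nq_val a)%R.
Proof. unfold nq_val, nq_opp, Rdiv; simpl; lra. Qed.

Lemma nq_mul_val a b :
  0 < nq_den a -> 0 < nq_den b -> nq_val (nq_mul a b) = (nq_val a * nq_val b)%R.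
Proof.
  intros Ha%lt_0_INR Hb%lt_0_INR; unfold nq_val, nq_mul; cbn [nq_pos nq_neg nq_den].
  rewrite !plus_INR, !mult_INR; field; lra.
Qed.

Definition nq_sub (a b : nq) : nq := nq_add a (nq_opp b).

Lemma nq_sub_val a b :
  0 < nq_den a -> 0 < nq_den b -> nq_val (nq_sub a b) = (nq_val a - nq_val b)%R.
Proof. intros; unfold nq_sub; rewrite nq_add_val, nq_opp_val; auto; lra. Qed.

Lemma nq_zero_val : nq_val nq_zero = 0%R.
Proof. unfold nq_val; simpl; lra. Qed.

Lemma Rdiv_lt_cross (x y z w : R) : (0 < y -> 0 < w -> x / y < z / w <-> x * w < z * y)%R.
Proof.
  intros Hy Hw; set (u := (x / y)%R); set (t := (z / w)%R).
  replace x with (u * y)%R by (unfold u; field; lra).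
  replace z with (t * w)%R by (unfold t; field; lra).
  assert (Hyw : (0 < y * w)%R) by nra.
  split; intros H; nra.
Qed.

Lemma nq_lt_test_spec a b :
  0 < nq_den a -> 0 < nq_den b -> nq_lt_test a b = 0 <-> (nq_val a < nq_val b)%R.
Proof.
  intros Ha%lt_0_INR Hb%lt_0_INR; unfold nq_lt_test, nq_val; rewrite Rdiv_lt_cross by auto.
  split; intros H.
  - assert (Hlt : nq_pos a * nq_den b + nq_neg b * nq_den a
                  < nq_pos b * nq_den a + nq_neg a * nq_den b) by lia.
    apply lt_INR in Hlt; rewrite !plus_INR, !mult_INR in Hlt; lra.
  - enough (nq_pos a * nq_den b + nq_neg b * nq_den a
            < nq_pos b * nq_den a + nq_neg a * nq_den b) by lia.
    apply INR_lt; rewrite !plus_INR, !mult_INR; lra.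
Qed.

Definition primrec_nq (k : nat) (f : list nat -> nq) : Prop :=
  primrec k (fun v => nq_pos (f v)) /\ primrec k (fun v => nq_neg (f v)) /\
  primrec k (fun v => nq_den (f v)).

Lemma primrec_nq_of_code k g : primrec k g -> primrec_nq k (fun v => nq_of_code (g v)).
Proof.
  intros Hg; pose proof primrec1_even; pose proof primrec1_div2.
  repeat split; cbn [nq_of_code nq_pos nq_neg nq_den]; primrec_auto.
Qed.

Lemma primrec_nq_add k f g :
  primrec_nq k f -> primrec_nq k g -> primrec_nq k (fun v => nq_add (f v) (g v)).
Proof.
  intros (? & ? & ?) (? & ? & ?); repeat split;
    cbn [nq_add nq_pos nq_neg nq_den]; primrec_arith.
Qed.

Lemma primrec_nq_sub k f g :
  primrec_nq k f -> primrec_nq k g -> primrec_nq k (fun v => nq_sub (f v) (g v)).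
Proof.
  intros (? & ? & ?) (? & ? & ?); repeat split;
    cbn [nq_sub nq_add nq_opp nq_pos nq_neg nq_den]; primrec_arith.
Qed.

Lemma primrec_nq_mul k f g :
  primrec_nq k f -> primrec_nq k g -> primrec_nq k (fun v => nq_mul (f v) (g v)).
Proof.
  intros (? & ? & ?) (? & ? & ?); repeat split;
    cbn [nq_mul nq_pos nq_neg nq_den]; primrec_arith.
Qed.

Lemma primrec_nq_lt_test k f g :
  primrec_nq k f -> primrec_nq k g -> primrec k (fun v => nq_lt_test (f v) (g v)).
Proof. intros (? & ? & ?) (? & ? & ?); unfold nq_lt_test; primrec_arith. Qed.

(** * Deciding whether two rational balls meet *)

Lemma decQvec_F1 n c : decQvec (S n) c Fin.F1 = Q2R (decQ (cantor_fst c)).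
Proof. unfold decQvec; simpl; now rewrite of_nat_cantor. Qed.

Lemma decQvec_FS n c i : decQvec (S n) c (Fin.FS i) = decQvec n (cantor_snd c) i.
Proof.
  unfold decQvec; simpl; destruct (Fin.to_nat i) as [j Hj]; simpl.
  now rewrite of_nat_cantor.
Qed.

Lemma beta_ball n k : beta n k = ball (decQvec n (cantor_fst k)) (Q2R (decQ (cantor_snd k))).
Proof. unfold beta; now rewrite of_nat_cantor. Qed.

Fixpoint nq_sqdist (n c1 c2 : nat) : nq :=
  match n with
  | 0 => nq_zero
  | S m =>
      nq_add (nq_mul (nq_sub (nq_of_code (cantor_fst c1)) (nq_of_code (cantor_fst c2)))
                     (nq_sub (nq_of_code (cantor_fst c1)) (nq_of_code (cantor_fst c2))))
             (nq_sqdist m (cantor_snd c1) (cantor_snd c2))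
  end.

Lemma nq_sqdist_den n c1 c2 : 0 < nq_den (nq_sqdist n c1 c2).
Proof.
  revert c1 c2; induction n as [|n IH]; intros; simpl; [lia|].
  pose proof (IH (cantor_snd c1) (cantor_snd c2)); pose proof (nq_den_of_code (cantor_fst c1));
    pose proof (nq_den_of_code (cantor_fst c2)); cbn in *; nia.
Qed.

Lemma nq_sqdist_val n c1 c2 :
  nq_val (nq_sqdist n c1 c2) = sumFin n (fun i => (decQvec n c1 i - decQvec n c2 i) ^ 2)%R.
Proof.
  revert c1 c2; induction n as [|n IH]; intros; simpl nq_sqdist; [apply nq_zero_val|].
  pose proof (nq_den_of_code (cantor_fst c1)); pose proof (nq_den_of_code (cantor_fst c2)).
  assert (Hsub : 0 < nq_den (nq_sub (nq_of_code (cantor_fst c1)) (nq_of_code (cantor_fst c2))))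
    by (cbn in *; nia).
  rewrite nq_add_val, nq_mul_val, nq_sub_val, IH by
    (auto using nq_sqdist_den; cbn in *; nia).
  cbn [sumFin]; rewrite !decQvec_F1, !nq_val_of_code; f_equal; [ring|].
  apply sumFin_ext; intros i; now rewrite !decQvec_FS.
Qed.

Lemma primrec_nq_sqdist n : forall k g1 g2, primrec k g1 -> primrec k g2 ->
  primrec_nq k (fun v => nq_sqdist n (g1 v) (g2 v)).
Proof.
  induction n as [|n IH]; intros k g1 g2 H1 H2; simpl.
  - repeat split; apply primrec_const.
  - assert (Hd : primrec_nq k (fun v => nq_sub (nq_of_code (cantor_fst (g1 v)))
                                               (nq_of_code (cantor_fst (g2 v)))))
      by (apply primrec_nq_sub; apply primrec_nq_of_code; primrec_auto).
    apply primrec_nq_add; [now apply primrec_nq_mul|apply IH; primrec_auto].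
Qed.

Definition balls_meet (n j k : nat) : Prop := exists z, beta n j z /\ beta n k z.

Definition meet_test (n j k : nat) : nat :=
  nq_lt_test nq_zero (nq_of_code (cantor_snd j))
  + nq_lt_test nq_zero (nq_of_code (cantor_snd k))
  + nq_lt_test (nq_sqdist n (cantor_fst j) (cantor_fst k))
      (nq_mul (nq_add (nq_of_code (cantor_snd j)) (nq_of_code (cantor_snd k)))
              (nq_add (nq_of_code (cantor_snd j)) (nq_of_code (cantor_snd k)))).

Lemma meet_test_spec n j k : balls_meet n j k <-> meet_test n j k = 0.
Proof.
  assert (Hdist : forall a b : Rn n, (dist a b ^ 2 = sumFin n (fun i => (a i - b i) ^ 2))%R)
    by (intros; apply pow2_sqrt, sumFin_nonneg; intros; apply pow2_ge_0).
  unfold balls_meet, meet_test; rewrite !beta_ball, balls_meet_iff, Hdist, <- nq_sqdist_val,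
    !nq_val_of_code.
  set (rj := nq_of_code (cantor_snd j)); set (rk := nq_of_code (cantor_snd k)).
  pose proof (nq_den_of_code (cantor_snd j)) as Hj.
  pose proof (nq_den_of_code (cantor_snd k)) as Hk.
  fold rj rk in Hj, Hk; set (s := nq_add rj rk).
  assert (Hs : 0 < nq_den s) by (unfold s; cbn in *; nia).
  replace (nq_val rj + nq_val rk)%R with (nq_val s) by (apply nq_add_val; auto).
  replace (nq_val s ^ 2)%R with (nq_val (nq_mul s s)) by (rewrite nq_mul_val by auto; ring).
  rewrite <- nq_zero_val, <- !nq_lt_test_spec by (auto using nq_sqdist_den; cbn in *; nia).
  lia.
Qed.

Lemma primrec2_meet_test n : primrec2 (meet_test n).
Proof.
  unfold primrec2, meet_test.
  assert (Hj : primrec_nq 2 (fun v => nq_of_code (cantor_snd (nth 0 v 0))))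
    by (apply primrec_nq_of_code; primrec_auto).
  assert (Hk : primrec_nq 2 (fun v => nq_of_code (cantor_snd (nth 1 v 0))))
    by (apply primrec_nq_of_code; primrec_auto).
  assert (Hz : primrec_nq 2 (fun _ => nq_zero)) by (repeat split; apply primrec_const).
  apply (primrec_comp2 _ _ _ _ primrec2_add); [apply (primrec_comp2 _ _ _ _ primrec2_add)|];
    apply primrec_nq_lt_test; auto.
  - apply primrec_nq_sqdist; primrec_auto.
  - apply primrec_nq_mul; apply primrec_nq_add; auto.
Qed.

(** * Components of effectively open sets *)

Lemma reach_in_component n (U C : Rn n -> Prop) W k0 :
  (forall x, U x <-> exists k, W k /\ beta n k x) -> conn_component U C ->
  (exists p, C p /\ beta n k0 p) ->
  forall k, reach W (balls_meet n) k0 k -> forall z, beta n k z -> C z.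
Proof.
  intros HU HC Hk0.
  assert (Hsub : forall k, W k -> forall z, beta n k z -> U z)
    by (intros k Wk z Hz; apply HU; eauto).
  assert (Hconn : forall k, connected (beta n k))
    by (intros; rewrite beta_ball; apply ball_connected).
  induction 1 as [Wk0|j k _ IH Wk [z [Bj Bk]]]; apply (component_absorbs n U C); eauto.
Qed.

(* Otherwise the balls reached from [k0] and the other balls of [W] would separate [C]. *)
Lemma component_in_reach n (U C : Rn n -> Prop) W k0 :
  (forall x, U x <-> exists k, W k /\ beta n k x) -> conn_component U C ->
  (exists p, C p /\ beta n k0 p) -> W k0 ->
  forall x, C x -> exists k, reach W (balls_meet n) k0 k /\ beta n k x.
Proof.
  intros HU (_ & HC & HCU & _) [p [Cp Bp]] Wk0 x Cx.
  assert (Hopen : forall k, is_open (beta n k)) by (intros; rewrite beta_ball; apply ball_open).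
  apply NNPP; intros Hx; apply HC.
  exists (fun z => exists k, reach W (balls_meet n) k0 k /\ beta n k z),
         (fun z => exists k, W k /\ ~ reach W (balls_meet n) k0 k /\ beta n k z).
  repeat split.
  - intros z [k [Rk Bz]]; destruct (Hopen k z Bz) as [e [He Hb]].
    exists e; split; [exact He|intros y Hy; exists k; auto].
  - intros z [k [Wk [Rk Bz]]]; destruct (Hopen k z Bz) as [e [He Hb]].
    exists e; split; [exact He|intros y Hy; exists k; auto].
  - intros z Cz; destruct (proj1 (HU z) (HCU z Cz)) as [k [Wk Bz]].
    destruct (classic (reach W (balls_meet n) k0 k)); [left|right]; eauto.
  - exists p; split; [|exists k0; split; [apply reach_base|]]; auto.
  - exists x; split; [exact Cx|].
    destruct (proj1 (HU x) (HCU x Cx)) as [k [Wk Bx]].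
    exists k; repeat split; auto; intros Rk; apply Hx; eauto.
  - intros z _ [j [Rj Bj]] [k [Wk [Rk Bk]]].
    apply Rk, (reach_step _ _ _ j); auto; exists z; auto.
Qed.

(* The argument works for every [n]. *)
Theorem lemma4p3 (n : nat) (Hn : (1 <= n)%nat) (U C : Rn n -> Prop) :
  effectively_open U -> conn_component U C -> effectively_open C.
Proof.
  intros [W [HW HU]] HC.
  pose proof HC as ([x0 Cx0] & _ & HCU & _).
  destruct (proj1 (HU x0) (HCU x0 Cx0)) as [k0 [Wk0 Bx0]].
  assert (Hk0 : exists p, C p /\ beta n k0 p) by eauto.
  exists (reach W (balls_meet n) k0); split.
  - exact (ce_reach _ _ _ k0 HW (primrec2_meet_test n) (meet_test_spec n)).
  - intros x; split.
    + now apply (component_in_reach n U C W k0).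
    + intros [k [Rk Bx]]; exact (reach_in_component n U C W k0 HU HC Hk0 k Rk x Bx).
Qed.
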